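(* Let $B\ge1$, $h\ge2$ be integers and $\Delta\ge 2$ an even integer. (1) There is a network (graph of maximum degree at most $\Delta$) with $\Theta(\Delta^h)$ nodes, together with an instance of the $B$-bit $h$-hop simulation problem on it, such that any (possibly randomized) Beeping Network algorithm that terminates within $\frac12 B(\Delta-1)^{h-2}(\Delta/2)^3$ rounds outputs the correct result with probability at most $2^{-\frac12 B(\Delta-1)^{h-2}(\Delta/2)^3}=2^{-\Theta(B\Delta^{h+1})}$; in particular, any $B$-bit $h$-hop simulation algorithm requires $\Omega(B\Delta^{h+1})$ beeping rounds to succeed with probability more than $2^{-\frac12 B(\Delta-1)^{h-2}(\Delta/2)^3}$. (2) There is a network of maximum degree at most $\Delta$ with $\Theta(\Delta^h)$ nodes, together with an instance of $B$-bit $h$-hop Local Broadcast on it, such that any (possibly randomized) algorithm that terminates within $\frac12 B(\Delta-1)^{h-2}(\Delta/2)^2$ rounds succeeds with probability at most $2^{-\frac12 B(\Delta-1)^{h-2}(\Delta/2)^2}=2^{-\Theta(B\Delta^{h})}$; in particular, any $B$-bit $h$-hop Local Broadcast algorithm requires $\Omega(B\Delta^{h})$ beeping rounds to succeed with probability more than that.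
   Context: A Beeping Network is a network of $n$ nodes with unique IDs whose topology is an undirected graph $G=(V,E)$. Time is divided into synchronous rounds and all nodes start simultaneously. In each round every node either beeps or listens; a listening node hears ''silence'' if no neighbor beeps and ''noise'' if at least one neighbor beeps, and cannot distinguish one beep from several. Nodes may use private randomness. $B$-bit $h$-hop simulation: each node holds messages (possibly different for different destinations) of at most $B$ bits addressed to other nodes, and must deliver each such message to its destination whenever the destination is within distance $h$ (hops) of the source. $B$-bit $h$-hop Local Broadcast: each node holds a single message of at most $B$ bits that must be delivered to all nodes within distance $h$ of it. *)

From mathcomp Require Import all_boot all_order all_algebra.
Set Implicit Arguments. Unset Strict Implicit. Unset Printing Implicit Defensive.
Import Order.TTheory GRing.Theory Num.Theory.

Section Beeping.
Variable T : finType.          (* the nodes; an element of T is the node's unique ID *)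
Variable adj : rel T.

Definition simple_graph : Prop :=
  (forall u v, adj u v = adj v u) /\ (forall v, ~~ adj v v).

Definition max_degree_le (D : nat) : Prop :=
  forall v, #|[set u | adj v u]| <= D.

Fixpoint within (k : nat) (u v : T) : bool :=
  match k with
  | 0 => u == v
  | k'.+1 => within k' u v || [exists w, within k' u w && adj w v]
  end.

(* Node v with local
   input x and private random seed s, having heard the history hs (one bit per
   past round: true = noise, false = silence or "v itself beeped"), decides
   whether to beep in the next round (alg_beep), and after the last round
   produces its output (alg_out). *)
Record algo (I S O : Type) := Algo {
  alg_beep : T -> I -> S -> seq bool -> bool;
  alg_out  : T -> I -> S -> seq bool -> O }.

Section Exec.
Variables (I S O : Type) (A : algo I S O) (x : T -> I) (s : T -> S).

Fixpoint hist (k : nat) : T -> seq bool :=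
  match k with
  | 0 => fun _ => [::]
  | k'.+1 =>
    let H := hist k' in
    let b := fun u => alg_beep A u (x u) (s u) (H u) in
    fun v => rcons (H v) (~~ b v && [exists u, adj v u && b u])
  end.

Definition outputs (rounds : nat) (v : T) : O :=
  alg_out A v (x v) (s v) (hist rounds v).
End Exec.

Local Open Scope ring_scope.
Definition is_seed_distr (R : numDomainType) (S : finType) (mu : T -> S -> R) :=
  forall v, (forall z, 0 <= mu v z) /\ \sum_(z : S) mu v z = 1.

(* Probability of success: inputs drawn uniformly at random from {ffun T -> I},
   seeds drawn independently, node v's seed according to mu v. *)
Definition succ_prob (R : numFieldType) (I S O : finType) (A : algo I S O)
    (mu : T -> S -> R) (rounds : nat)
    (correct : {ffun T -> I} -> (T -> O) -> bool) : R :=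
  (#|{ffun T -> I}|%:R)^-1 *
  \sum_(x : {ffun T -> I}) \sum_(s : {ffun T -> S})
     (\prod_(v : T) mu v (s v)) * (correct x (outputs A x s rounds))%:R.

(* The instance is the set P of (source, destination)
   pairs; x u w is the message held by u for destination w (only entries with
   (u,w) in P are relevant). *)
Definition sim_instance (h : nat) (P : {set T * T}) : Prop :=
  forall p, p \in P -> (p.1 != p.2) && within h p.1 p.2.

Definition sim_correct (B : nat) (P : {set T * T})
    (x : {ffun T -> {ffun T -> B.-tuple bool}})
    (o : T -> {ffun T -> B.-tuple bool}) : bool :=
  [forall p in P, o p.2 p.1 == x p.1 p.2].

Definition lb_correct (B h : nat) (x : {ffun T -> B.-tuple bool})
    (o : T -> {ffun T -> B.-tuple bool}) : bool :=
  [forall u, forall w, ((u != w) && within h u w) ==> (o w u == x u)].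
End Beeping.

From mathcomp Require Import all_boot all_order all_algebra zify.
Set Implicit Arguments. Unset Strict Implicit. Unset Printing Implicit Defensive.
Import Order.TTheory GRing.Theory Num.Theory.

(* Split the network by a set Y of nodes such that the edges leaving Y form a
   complete bipartite graph.  In each round the nodes of Y then learn from the
   outside a single bit, whether some boundary node outside Y beeps; so for
   fixed seeds and fixed inputs on Y, the outputs of Y after r rounds take at
   most 2^r values.  If correct outputs of Y determine K uniformly random input
   bits held outside Y, success has probability at most 2^(r - K), which is at
   most 2^(-K/2) once 2r <= K.
   The network: D/2 roots, all joined to the D/2 nodes of layer 1, below which
   hang trees of depth h - 1 with branching D/2 at the first level and D - 1
   afterwards, so that layer h has (D/2)^2 (D-1)^(h-2) nodes.  For simulation,
   every root sends B bits to every node of layer h, and Y is everything below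
   the roots; for Local Broadcast there is a single root, which must learn the
   messages of layer h, and Y is that root. *)

Section Within.
Variables (T : finType) (adj : rel T).

Lemma within_cons k u w v : adj u w -> within adj k w v -> within adj k.+1 u v.
Proof.
move=> auw; elim: k v => [|k IH] v.
  by move/eqP <-; apply/orP; right; apply/existsP; exists u; rewrite eqxx.
case/orP => [/IH wk|/existsP[w' /andP[/IH wk aw'v]]]; apply/orP; first by left.
by right; apply/existsP; exists w'; rewrite aw'v andbT.
Qed.

Lemma within_sym k u v : symmetric adj -> within adj k u v -> within adj k v u.
Proof.
move=> adjC; elim: k u v => [|k IH] u v; first by rewrite /= eq_sym.
case/orP => [/IH wk|/existsP[w /andP[/IH wk awv]]]; first by apply/orP; left.
by apply: within_cons wk; rewrite adjC.
Qed.

End Within.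

Section Cut.
Variables (T : finType) (adj : rel T).

Definition complete_boundary (Y : {set T}) : Prop :=
  forall y y' u u', y \in Y -> y' \in Y -> u \notin Y -> u' \notin Y ->
  adj y u -> adj y' u' -> adj y' u.

Lemma complete_boundary_set1 (y : T) : complete_boundary [set y].
Proof. by move=> _ _ u u' /set1P -> /set1P ->. Qed.

Variables (I S : finType) (O : Type) (A : algo T I S O) (Y : {set T}).
Hypothesis boundaryY : complete_boundary Y.

Definition boundary_beep (x : T -> I) (s : T -> S) (k : nat) : bool :=
  [exists u, [&& u \notin Y, [exists y in Y, adj y u] &
     alg_beep A u (x u) (s u) (hist adj A x s k u)]].

(* The execution as seen from Y when everything outside Y is replaced by the
   single bit [z k] per round telling whether some boundary node beeps. *)
Fixpoint cut_hist (x : T -> I) (s : T -> S) (z : nat -> bool) (k : nat) : T -> seq bool :=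
  match k with
  | 0 => fun _ => [::]
  | k'.+1 =>
    let H := cut_hist x s z k' in
    let b := fun u => alg_beep A u (x u) (s u) (H u) in
    fun v => rcons (H v) (~~ b v && ([exists u, (u \in Y) && adj v u && b u]
                     || ([exists u, (u \notin Y) && adj v u] && z k')))
  end.

Lemma eq_cut_hist x s z z' r : (forall k, k < r -> z k = z' k) ->
  forall k, k <= r -> cut_hist x s z k = cut_hist x s z' k.
Proof. by move=> zz'; elim=> [//|k IH] kr /=; rewrite IH ?(ltnW kr) // zz'. Qed.

Lemma cut_hist_boundary_beep (x x' : T -> I) s : {in Y, x' =1 x} ->
  forall k, {in Y, cut_hist x s (boundary_beep x' s) k =1 hist adj A x' s k}.
Proof.
move=> xx'; elim=> [//|k IH] y yY /=.
rewrite IH // xx' //; congr (rcons _ (_ && _)).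
set b := fun u => alg_beep A u (x' u) (s u) (hist adj A x' s k u).
have bY u : u \in Y -> alg_beep A u (x u) (s u) (cut_hist x s (boundary_beep x' s) k u) = b u.
  by move=> uY; rewrite /b IH // xx'.
apply/idP/idP.
- case/orP => [/existsP[u /andP[/andP[uY ayu]]]|].
    by rewrite bY // => bu; apply/existsP; exists u; rewrite ayu.
  case/andP=> /existsP[u /andP[uY ayu]] /existsP[w /and3P[wY /existsP[y' /andP[y'Y ay'w]] bw]].
  apply/existsP; exists w; rewrite bw andbT.
  exact: (boundaryY y'Y yY wY uY ay'w ayu).
- case/existsP=> u /andP[ayu bu]; have [uY|uY] := boolP (u \in Y).
    by apply/orP; left; apply/existsP; exists u; rewrite uY ayu bY.
  apply/orP; right; apply/andP; split; apply/existsP; exists u; rewrite uY ?ayu //=.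
  by rewrite bu andbT; apply/existsP; exists y; rewrite yY.
Qed.

End Cut.

Section SeedWeights.
Local Open Scope ring_scope.
Variables (T : finType) (R : realFieldType) (S : finType) (mu : T -> S -> R).
Hypothesis mu_distr : is_seed_distr mu.

Lemma seed_weight_ge0 (s : {ffun T -> S}) : 0 <= \prod_v mu v (s v).
Proof. by apply: prodr_ge0 => v _; case: (mu_distr v). Qed.

Lemma sum_seed_weight : \sum_(s : {ffun T -> S}) \prod_v mu v (s v) = 1.
Proof.
rewrite -(bigA_distr_bigA (fun v z => mu v z)) /=.
by rewrite big1 // => v _; case: (mu_distr v).
Qed.

Lemma succ_prob_ge0 (adj : rel T) (I O : finType) (A : algo T I S O) r correct :
  0 <= succ_prob adj A mu r correct.
Proof.
apply: mulr_ge0; first by rewrite invr_ge0.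
apply: sumr_ge0 => x _; apply: sumr_ge0 => s _.
by apply: mulr_ge0; rewrite ?seed_weight_ge0.
Qed.

End SeedWeights.

Local Open Scope ring_scope.
Lemma sqr_le_inv_exp2 (R : realFieldType) (q : R) (r K n : nat) : 0 <= q ->
  q <= (2 ^ r)%:R / n%:R -> (2 * r <= K)%N -> (2 ^ K <= n)%N -> q ^+ 2 * 2 ^+ K <= 1.
Proof.
move=> q0 qn rK Kn.
have n0 : 0 < n%:R :> R by rewrite ltr0n (leq_trans _ Kn) ?expn_gt0.
have q2 : q ^+ 2 <= ((2 ^ r)%:R / n%:R) ^+ 2 by rewrite lerXn2r ?nnegrE ?(le_trans q0 qn).
apply: (le_trans (ler_wpM2r _ q2)); first by rewrite exprn_ge0.
rewrite expr_div_n -mulrAC ler_pdivrMr ?exprn_gt0 // mul1r.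
rewrite -!natrX -natrM ler_nat -expnM -expnD.
apply: (@leq_trans (2 ^ (K * 2))); first by rewrite leq_exp2l //; lia.
by rewrite expnM leq_exp2r.
Qed.
Local Close Scope ring_scope.

Section Counting.
Variables (T : finType) (adj : rel T) (I S O V : finType).
Variables (A : algo T I S O) (Y : {set T}) (correct : {ffun T -> I} -> (T -> O) -> bool).
Hypothesis boundaryY : complete_boundary adj Y.

(* [secret]/[plant] form a lens onto the part of the input hidden from [Y],
   which [decode] must read off the outputs of [Y] whenever they are correct. *)
Variables (secret : {ffun T -> I} -> V) (plant : {ffun T -> I} -> V -> {ffun T -> I}).
Variable decode : (T -> O) -> V.
Hypothesis secret_plant : forall x v, secret (plant x v) = v.
Hypothesis plant_secret : forall x, plant x (secret x) = x.
Hypothesis plant_plant : forall x v w, plant (plant x v) w = plant x w.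
Hypothesis plant_cut : forall x v, {in Y, plant x v =1 x}.
Hypothesis decode_correct : forall x o, correct x o -> decode o = secret x.
Hypothesis decode_cut : forall o o', {in Y, o =1 o'} -> decode o = decode o'.

Lemma card_correct_secrets (x : {ffun T -> I}) (s : {ffun T -> S}) r :
  #|[pred v | correct (plant x v) (outputs adj A (plant x v) s r)]| <= 2 ^ r.
Proof.
pose guess (t : r.-tuple bool) :=
  decode (fun y => alg_out A y (x y) (s y) (cut_hist adj A Y x s (nth false t) r y)).
apply: (@leq_trans #|[set guess t | t in [set: r.-tuple bool]]|).
  apply/subset_leq_card/subsetP => v; rewrite inE => /= ok.
  have sz : size (map (boundary_beep adj A Y (plant x v) s) (iota 0 r)) == r.
    by rewrite size_map size_iota.
  apply/imsetP; exists (Tuple sz); first by rewrite inE.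
  rewrite -[v in LHS](secret_plant x v) -(decode_correct ok) /guess.
  apply: decode_cut => y yY; rewrite /outputs plant_cut //.
  rewrite (@eq_cut_hist _ adj _ _ _ A Y x s _ (boundary_beep adj A Y (plant x v) s) r) //.
    by rewrite (cut_hist_boundary_beep _ boundaryY) // => y' y'Y; rewrite plant_cut.
  by move=> k kr; rewrite /= (nth_map 0) ?size_iota // nth_iota.
apply: leq_trans (leq_imset_card _ _) _.
by rewrite cardsT card_tuple card_bool.
Qed.

Lemma card_correct_inputs (s : {ffun T -> S}) r :
  (\sum_(x : {ffun T -> I}) correct x (outputs adj A x s r)) * #|V|
  <= 2 ^ r * #|{ffun T -> I}|.
Proof.
set f := fun x : {ffun T -> I} => nat_of_bool (correct x (outputs adj A x s r)).
rewrite big_distrl /=.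
have -> : \sum_x f x * #|V| = \sum_x \sum_(v : V) f (plant x v).
  rewrite pair_bigA /=.
  pose swap (p : {ffun T -> I} * V) := (plant p.1 p.2, secret p.1).
  have swapK : involutive swap.
    by case=> x v; rewrite /swap /= plant_plant plant_secret secret_plant.
  rewrite (reindex_inj (inv_inj swapK)) /= (eq_bigr (fun p => f p.1)).
    rewrite -(pair_bigA _ (fun x (v : V) => f x)) /=.
    by apply: eq_bigr => x _; rewrite sum_nat_const mulnC.
  by case=> x v _; rewrite /swap /= plant_plant plant_secret.
rewrite mulnC -sum_nat_const; apply: leq_sum => x _.
apply: leq_trans (card_correct_secrets x s r).
rewrite -sum1_card [X in _ <= X]big_mkcond /=.
by apply: leq_sum => v _; rewrite /f inE; case: correct.
Qed.

Section Probability.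
Local Open Scope ring_scope.
Variable R : realFieldType.
Variable mu : T -> S -> R.
Hypothesis mu_distr : is_seed_distr mu.

Lemma succ_prob_le r : (0 < #|V|)%N ->
  succ_prob adj A mu r correct <= (2 ^ r)%:R / #|V|%:R.
Proof.
move=> V0; rewrite /succ_prob exchange_big /=.
set N := #|{ffun T -> I}|.
under eq_bigr do rewrite -mulr_sumr -natr_sum.
apply: (@le_trans _ _ (N%:R^-1 * \sum_(s : {ffun T -> S})
                         \prod_v mu v (s v) * ((2 ^ r * N)%:R / #|V|%:R))).
  apply: ler_wpM2l; first by rewrite invr_ge0.
  apply: ler_sum => s _; apply: ler_wpM2l; first exact: seed_weight_ge0.
  by rewrite ler_pdivlMr ?ltr0n // -natrM ler_nat card_correct_inputs.
rewrite -mulr_suml sum_seed_weight // mul1r.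
have [->|N0] := posnP N; first by rewrite invr0 mul0r divr_ge0.
by rewrite natrM [(2 ^ r)%:R * _]mulrC -!mulrA mulKf ?pnatr_eq0 -?lt0n.
Qed.

Theorem cut_lower_bound r K : (2 * r <= K)%N -> (2 ^ K <= #|V|)%N ->
  succ_prob adj A mu r correct ^+ 2 * 2 ^+ K <= 1.
Proof.
move=> rK KV; apply: (sqr_le_inv_exp2 (succ_prob_ge0 _ _ _ _ _) _ rK KV) => //.
by apply: succ_prob_le; rewrite (leq_trans _ KV) ?expn_gt0.
Qed.

End Probability.

End Counting.

Lemma leq_card_inj_ltn (X : finType) (A : {pred X}) (f : X -> nat) c :
  {in A &, injective f} -> {in A, forall x, f x < c} -> #|A| <= c.
Proof.
move=> finj fc; rewrite cardE -(size_map f) -[c](size_iota 0).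
apply: uniq_leq_size => [|y /mapP[x]].
  by rewrite map_inj_in_uniq ?enum_uniq // => x y; rewrite !mem_enum; exact: finj.
by rewrite mem_enum => Ax ->; rewrite mem_iota /= fc.
Qed.

Section LayeredGraph.
Variables (h a m : nat).
Local Notation D := (a * 2).

(* Layer 0 has [m] nodes, all joined to the [a] nodes of layer 1; from layer 1
   on, every node has [branching] children in the next layer, the children of
   the [i]-th node being those with index [i * branching + r].  Pairs [(j, i)]
   with [width j <= i] are isolated padding vertices. *)
Definition vertex : finType := ('I_h.+1 * 'I_(D ^ h).+1)%type.
Definition width j := if j == 0 then m else if j == 1 then a else a * a * (D - 1) ^ (j - 2).
Definition branching j := if j == 2 then a else D - 1.
Definition is_node (u : vertex) := nat_of_ord u.2 < width u.1.
Definition child (u v : vertex) := [&& nat_of_ord v.1 == u.1.+1, is_node u, is_node v &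
   (nat_of_ord u.1 == 0) || (v.2 %/ branching v.1 == u.2)].
Definition layered_adj : rel vertex := fun u v => child u v || child v u.
Definition layer j := [set u : vertex | (nat_of_ord u.1 == j) && is_node u].

Lemma branching_gt0 j : 0 < a -> 0 < branching j.
Proof. by rewrite /branching; case: ifP; lia. Qed.

Lemma branching_le j : branching j <= D - 1.
Proof. by rewrite /branching; case: ifP; lia. Qed.

Lemma widthS j : 0 < j -> width j.+1 = width j * branching j.+1.
Proof.
rewrite /width /branching; case: j => [//|[|j]] _ /=; first by rewrite muln1.
by rewrite (_ : j.+3 - 2 = (j.+2 - 2).+1) ?expnSr ?mulnA //; lia.
Qed.

Lemma width_deep j : 1 < j -> width j = a * a * (D - 1) ^ (j - 2).
Proof. by rewrite /width; case: j => [|[|j]]. Qed.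

Lemma width_le j : 0 < a -> 0 < h -> m <= a -> j <= h -> width j <= D ^ h.
Proof.
move=> a0 h0 ma jh.
have Dj i : i <= h -> D ^ i <= D ^ h by move=> ih; rewrite leq_pexp2l //; lia.
have D1 : D <= D ^ h by rewrite -{1}(expn1 D) Dj //; lia.
rewrite /width; case: j jh => [|[|j]] jh /=; try lia.
apply: leq_trans (Dj _ jh); rewrite !subSS subn0 !expnS mulnA leq_mul //; first lia.
by case: j {jh} => [|j]; rewrite ?expn0 ?leq_exp2r //; lia.
Qed.

Lemma card_vertex : 0 < a -> D ^ h <= #|vertex| <= 2 * h.+1 * D ^ h.
Proof.
move=> a0; have Dh : 0 < D ^ h by rewrite expn_gt0 muln_gt0 a0.
by rewrite card_prod !card_ord; apply/andP; split; nia.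
Qed.

Lemma vertex_eq (u v : vertex) :
  nat_of_ord u.1 = v.1 -> nat_of_ord u.2 = v.2 -> u = v.
Proof. by case: u v => [x y] [z w] /= /val_inj -> /val_inj ->. Qed.

Lemma layered_simple : simple_graph layered_adj.
Proof.
split => [u v|v]; first by rewrite /layered_adj orbC.
by rewrite /layered_adj orbb /child; apply/negP => /and4P[/eqP e _ _ _]; lia.
Qed.

Lemma card_children (v : vertex) : 0 < a ->
  #|[set u | child v u]| <= (if nat_of_ord v.1 == 0 then a else branching v.1.+1).
Proof.
move=> a0; case: ifP => v0.
- apply: (leq_card_inj_ltn (f := fun u : vertex => nat_of_ord u.2)).
    move=> u w; rewrite !inE => /and4P[/eqP e1 _ _ _] /and4P[/eqP e2 _ _ _] e.
    by apply: vertex_eq; rewrite ?e1 ?e2.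
  by move=> u; rewrite inE => /and4P[/eqP e1 _]; rewrite /is_node e1 (eqP v0).
- apply: (leq_card_inj_ltn (f := fun u : vertex => u.2 %% branching u.1)).
    move=> u w; rewrite !inE => /and4P[/eqP e1 _ _ c1] /and4P[/eqP e2 _ _ c2].
    rewrite v0 /= in c1 c2; rewrite e1 e2 => e.
    apply: vertex_eq; first by rewrite e1 e2.
    rewrite (divn_eq u.2 (branching u.1)) (divn_eq w.2 (branching w.1)).
    by rewrite (eqP c1) (eqP c2) e1 e2 e.
  by move=> u; rewrite inE => /and4P[/eqP e1 _ _ _]; rewrite -e1 ltn_pmod ?branching_gt0.
Qed.

Lemma card_parents (v : vertex) :
  #|[set u | child u v]| <= (if nat_of_ord v.1 == 1 then m else 1).
Proof.
case: ifP => v1.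
- apply: (leq_card_inj_ltn (f := fun u : vertex => nat_of_ord u.2)).
    move=> u w; rewrite !inE => /and4P[/eqP e1 _ _ _] /and4P[/eqP e2 _ _ _] e.
    by apply: vertex_eq => //; lia.
  move=> u; rewrite inE => /and4P[/eqP e1 uv _ _].
  by move: uv; rewrite /is_node (_ : nat_of_ord u.1 = 0) //; move/eqP: v1; lia.
- apply: (leq_card_inj_ltn (f := fun u : vertex => 0)) => // u w.
  rewrite !inE => /and4P[/eqP e1 _ _ c1] /and4P[/eqP e2 _ _ c2] _.
  have u0 : (nat_of_ord u.1 == 0) = false by apply/eqP => u0; rewrite e1 u0 in v1.
  have w0 : (nat_of_ord w.1 == 0) = false by apply/eqP => w0; rewrite e2 w0 in v1.
  rewrite u0 w0 /= in c1 c2.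
  by apply: vertex_eq; [move: e1 e2 => -> [] | rewrite -(eqP c1) -(eqP c2)].
Qed.

Lemma layered_max_degree : 0 < a -> m <= a -> max_degree_le layered_adj D.
Proof.
move=> a0 ma v.
have -> : [set u | layered_adj v u] = [set u | child v u] :|: [set u | child u v].
  by apply/setP => u; rewrite !inE.
apply: leq_trans (leq_card_setU _ _) _.
apply: leq_trans (leq_add (card_children v a0) (card_parents v)) _.
have := branching_le v.1.+1; case: ifP => [/eqP ->|_] /=; first lia.
by case: ifP => [/eqP ->|_]; rewrite /branching /=; lia.
Qed.

Lemma within_from_top j : 0 < a -> 0 < j <= h ->
  {in layer 0 & layer j, forall c u, within layered_adj j c u}.
Proof.
move=> a0; elim: j => [//|j IH] /andP[_ jh] c u.
rewrite !inE => /andP[/eqP c0 vc] /andP[/eqP uj vu].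
have [j0|j0] := posnP j.
  rewrite j0 /=; apply/orP; right; apply/existsP; exists c; rewrite eqxx /=.
  by rewrite /layered_adj /child uj j0 c0 eqxx vc vu.
pose w : vertex := (inord j, inord (u.2 %/ branching j.+1)).
have w1 : nat_of_ord w.1 = j by rewrite /= inordK //; lia.
have w2 : nat_of_ord w.2 = u.2 %/ branching j.+1.
  by rewrite /= inordK // ltnS (leq_trans (leq_div _ _)) // -ltnS.
have vw : is_node w.
  rewrite /is_node w1 w2 ltn_divLR ?branching_gt0 // -widthS //.
  by move: vu; rewrite /is_node uj.
apply/orP; right; apply/existsP; exists w; apply/andP; split.
  by apply: IH; rewrite ?j0 ?inE ?c0 ?w1 ?eqxx //=; lia.
by apply/orP; left; rewrite /child uj w1 eqxx vw vu /= w2 eqxx orbT.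
Qed.

Lemma card_layer j : 0 < a -> 0 < h -> m <= a -> j <= h -> width j <= #|layer j|.
Proof.
move=> a0 h0 ma jh; have ij (i : 'I_(width j)) : i < (D ^ h).+1.
  by rewrite ltnS (leq_trans _ (width_le a0 h0 ma jh)) // ltnW.
pose f (i : 'I_(width j)) : vertex := (inord j, inord i).
have finj : injective f.
  by move=> i i' [] /(congr1 val); rewrite /= !inordK // => /val_inj.
apply: (@leq_trans #|f @: [set: 'I_(width j)]|); first by rewrite card_imset // cardsT card_ord.
apply/subset_leq_card/subsetP => _ /imsetP[i _ ->].
by rewrite inE /is_node /= !inordK // eqxx ltn_ord.
Qed.

Lemma layered_complete_boundary :
  complete_boundary layered_adj [set u | nat_of_ord u.1 != 0].
Proof.
move=> y y' u u'; rewrite !inE => _ _ /negPn/eqP u0 /negPn/eqP u'0.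
case/orP => [/and4P[/eqP e _ _ _]|/and4P[/eqP e1 vu vy _]]; first lia.
case/orP => [/and4P[/eqP e _ _ _]|/and4P[/eqP e2 vu' vy' _]]; first lia.
by apply/orP; right; rewrite /child e2 u'0 u0 eqxx vu vy'.
Qed.

End LayeredGraph.

Section SimulationSecret.
Variables (T : finType) (P : {set T * T}) (B : nat).
Local Notation J := (B.-tuple bool).
Local Notation key := {p : T * T | p \in P}.

Definition sim_secret (x : {ffun T -> {ffun T -> J}}) : {ffun key -> J} :=
  [ffun q => x (val q).1 (val q).2].
Definition sim_plant (x : {ffun T -> {ffun T -> J}}) (v : {ffun key -> J}) :=
  [ffun u => [ffun w => if insub (u, w) is Some q then v q else x u w]].
Definition sim_decode (o : T -> {ffun T -> J}) : {ffun key -> J} :=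
  [ffun q => o (val q).2 (val q).1].

Lemma sim_secret_plant x v : sim_secret (sim_plant x v) = v.
Proof. by apply/ffunP => q; rewrite !ffunE -surjective_pairing valK. Qed.

Lemma sim_plant_secret x : sim_plant x (sim_secret x) = x.
Proof.
apply/ffunP => u; apply/ffunP => w; rewrite !ffunE.
by case: insubP => [q _ e|//]; rewrite ffunE e.
Qed.

Lemma sim_plant_plant x v v' : sim_plant (sim_plant x v) v' = sim_plant x v'.
Proof. by apply/ffunP => u; apply/ffunP => w; rewrite !ffunE; case: insubP. Qed.

Lemma sim_decode_correct x o : sim_correct P x o -> sim_decode o = sim_secret x.
Proof.
move/forallP => ok; apply/ffunP => q; rewrite !ffunE.
by have := ok (val q); rewrite (valP q) => /eqP.
Qed.

Lemma card_sim_secret : #|{ffun key -> J}| = 2 ^ (B * #|P|).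
Proof. by rewrite card_ffun card_tuple card_bool card_sig -expnM. Qed.

Variable Y : {set T}.
Hypotheses (srcY : forall p, p \in P -> p.1 \notin Y) (dstY : forall p, p \in P -> p.2 \in Y).

Lemma sim_plant_cut x v : {in Y, sim_plant x v =1 x}.
Proof.
move=> y yY; apply/ffunP => w; rewrite !ffunE.
by case: insubP => [q _ e|//]; have := srcY (valP q); rewrite e yY.
Qed.

Lemma sim_decode_cut o o' : {in Y, o =1 o'} -> sim_decode o = sim_decode o'.
Proof. by move=> oo'; apply/ffunP => q; rewrite !ffunE oo' ?dstY ?(valP q). Qed.

End SimulationSecret.

Section BroadcastSecret.
Variables (T : finType) (Q : {set T}) (B : nat) (y0 : T).
Local Notation J := (B.-tuple bool).
Local Notation key := {u : T | u \in Q}.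

Definition lb_secret (x : {ffun T -> J}) : {ffun key -> J} := [ffun q => x (val q)].
Definition lb_plant (x : {ffun T -> J}) (v : {ffun key -> J}) :=
  [ffun u => if insub u is Some q then v q else x u].
Definition lb_decode (o : T -> {ffun T -> J}) : {ffun key -> J} := [ffun q => o y0 (val q)].

Lemma lb_secret_plant x v : lb_secret (lb_plant x v) = v.
Proof. by apply/ffunP => q; rewrite !ffunE valK. Qed.

Lemma lb_plant_secret x : lb_plant x (lb_secret x) = x.
Proof. by apply/ffunP => u; rewrite !ffunE; case: insubP => [q _ e|//]; rewrite ffunE e. Qed.

Lemma lb_plant_plant x v v' : lb_plant (lb_plant x v) v' = lb_plant x v'.
Proof. by apply/ffunP => u; rewrite !ffunE; case: insubP. Qed.

Lemma lb_decode_correct h adj : {in Q, forall u, (u != y0) && within adj h u y0} ->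
  forall x o, lb_correct adj h x o -> lb_decode o = lb_secret x.
Proof.
move=> Qy0 x o /forallP ok; apply/ffunP => q; rewrite !ffunE.
by have /forallP/(_ y0) := ok (val q); rewrite Qy0 ?(valP q) //= => /eqP.
Qed.

Lemma card_lb_secret : #|{ffun key -> J}| = 2 ^ (B * #|Q|).
Proof. by rewrite card_ffun card_tuple card_bool card_sig -expnM. Qed.

Hypothesis y0Q : y0 \notin Q.

Lemma lb_plant_cut x v : {in [set y0], lb_plant x v =1 x}.
Proof.
move=> _ /set1P ->; rewrite ffunE.
by case: insubP => [q _ e|//]; have := valP q; rewrite e (negbTE y0Q).
Qed.

Lemma lb_decode_cut o o' : {in [set y0], o =1 o'} -> lb_decode o = lb_decode o'.
Proof. by move=> oo'; apply/ffunP => q; rewrite !ffunE oo' ?set11. Qed.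

End BroadcastSecret.

Section Bounds.
Variables (h a B : nat).
Hypotheses (h2 : 1 < h) (a0 : 0 < a).
Local Notation J := (B.-tuple bool).
Local Open Scope ring_scope.

Lemma layered_sim_instance :
  sim_instance (@layered_adj h a a) h (setX (layer h a a 0) (layer h a a h)).
Proof.
move=> p; rewrite inE => /andP[p1 p2]; rewrite within_from_top // ?andbT; last lia.
apply: contraTneq p1 => ->; rewrite !inE in p2 *; case/andP: p2 => /eqP ->; lia.
Qed.

Lemma layered_sim_bound (R : realFieldType) (S : finType)
    (A : algo (vertex h a) {ffun vertex h a -> J} S {ffun vertex h a -> J})
    (mu : vertex h a -> S -> R) rounds :
  is_seed_distr mu -> (2 * rounds <= B * (a * 2 - 1) ^ (h - 2) * a ^ 3)%N ->
  succ_prob (@layered_adj h a a) A mu rounds (sim_correct (setX (layer h a a 0) (layer h a a h)))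
    ^+ 2 * 2 ^+ (B * (a * 2 - 1) ^ (h - 2) * a ^ 3) <= 1.
Proof.
set P := setX _ _ => mu_distr rK.
have srcY p : p \in P -> p.1 \notin [set u : vertex h a | nat_of_ord u.1 != 0].
  by rewrite !inE => /andP[/andP[-> _] _].
have dstY p : p \in P -> p.2 \in [set u : vertex h a | nat_of_ord u.1 != 0].
  by rewrite !inE => /andP[_ /andP[/eqP -> _]]; lia.
apply: (cut_lower_bound A (@layered_complete_boundary h a a) (@sim_secret_plant _ P B)
  (@sim_plant_secret _ P B) (@sim_plant_plant _ P B) (sim_plant_cut srcY)
  (@sim_decode_correct _ P B) (sim_decode_cut dstY) mu_distr rK).
rewrite card_sim_secret leq_exp2l // cardsX -mulnA leq_mul2l; apply/orP; right.
have h0 : (0 < h)%N by lia.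
apply: leq_trans (leq_mul (@card_layer h a a 0 a0 h0 (leqnn a) (leq0n h))
                          (@card_layer h a a h a0 h0 (leqnn a) (leqnn h))).
by rewrite (width_deep _ _ h2) /width /= !expnS expn0 muln1; nia.
Qed.

Lemma layered_lb_bound (R : realFieldType) (S : finType)
    (A : algo (vertex h a) J S {ffun vertex h a -> J}) (mu : vertex h a -> S -> R) rounds :
  is_seed_distr mu -> (2 * rounds <= B * (a * 2 - 1) ^ (h - 2) * a ^ 2)%N ->
  succ_prob (@layered_adj h a 1) A mu rounds (lb_correct (@layered_adj h a 1) h)
    ^+ 2 * 2 ^+ (B * (a * 2 - 1) ^ (h - 2) * a ^ 2) <= 1.
Proof.
move=> mu_distr rK; pose y0 : vertex h a := (ord0, ord0).
have y0Q : y0 \notin layer h a 1 h by rewrite inE /=; apply/nandP; left; rewrite eq_sym; lia.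
have Qy0 : {in layer h a 1 h, forall u, (u != y0) && within (@layered_adj h a 1) h u y0}.
  move=> u uh; rewrite (memPn y0Q) //=; apply: within_sym; first exact: (layered_simple h a 1).1.
  by apply: (within_from_top a0 _ _ uh); rewrite ?inE ?leqnn ?andbT //; lia.
apply: (cut_lower_bound A (@complete_boundary_set1 _ _ y0) (@lb_secret_plant _ _ B)
  (@lb_plant_secret _ _ B) (@lb_plant_plant _ _ B) (lb_plant_cut y0Q)
  (lb_decode_correct Qy0) (@lb_decode_cut _ _ B y0) mu_distr rK).
rewrite card_lb_secret leq_exp2l // -mulnA leq_mul2l; apply/orP; right.
have h0 : (0 < h)%N by lia.
apply: leq_trans (@card_layer h a 1 h a0 h0 a0 (leqnn h)).
by rewrite (width_deep _ _ h2) /width /= !expnS expn0 muln1; nia.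
Qed.

End Bounds.

Local Open Scope ring_scope.

Theorem theorem7 :
  forall h : nat, (2 <= h)%N ->
  exists d1 d2 : nat, (0 < d1)%N /\ (0 < d2)%N /\
  forall (B D : nat), (1 <= B)%N -> (2 <= D)%N -> ~~ odd D ->
  (* part (1): B-bit h-hop simulation *)
  (exists (T : finType) (adj : rel T) (P : {set T * T}),
     simple_graph adj /\ max_degree_le adj D /\
     (D ^ h <= d1 * #|T| /\ #|T| <= d2 * D ^ h)%N /\
     sim_instance adj h P /\
     let K := (B * (D - 1) ^ (h - 2) * (D %/ 2) ^ 3)%N in
     forall (R : realFieldType) (S : finType)
            (A : algo T {ffun T -> B.-tuple bool} S {ffun T -> B.-tuple bool})
            (mu : T -> S -> R) (rounds : nat),
       is_seed_distr mu -> (2 * rounds <= K)%N ->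
       (succ_prob adj A mu rounds (sim_correct P)) ^+ 2 * 2 ^+ K <= 1)
  /\
  (* part (2): B-bit h-hop Local Broadcast *)
  (exists (T : finType) (adj : rel T),
     simple_graph adj /\ max_degree_le adj D /\
     (D ^ h <= d1 * #|T| /\ #|T| <= d2 * D ^ h)%N /\
     let K := (B * (D - 1) ^ (h - 2) * (D %/ 2) ^ 2)%N in
     forall (R : realFieldType) (S : finType)
            (A : algo T (B.-tuple bool) S {ffun T -> B.-tuple bool})
            (mu : T -> S -> R) (rounds : nat),
       is_seed_distr mu -> (2 * rounds <= K)%N ->
       (succ_prob adj A mu rounds (lb_correct adj h)) ^+ 2 * 2 ^+ K <= 1).
Proof.
move=> h h2; exists 1%N, (2 * h.+1)%N; do 2 split => //.
move=> B D _ D2 D_even.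
have [a Da] : exists a, D = (a * 2)%N by exists (D %/ 2)%N; rewrite divnK // dvdn2.
subst D; rewrite mulnK //; have a0 : (0 < a)%N by lia.
have card_T : ((a * 2) ^ h <= 1 * #|vertex h a| /\ #|vertex h a| <= 2 * h.+1 * (a * 2) ^ h)%N.
  by rewrite mul1n; apply/andP; exact: card_vertex.
split.
- exists (vertex h a), (@layered_adj h a a), (setX (layer h a a 0) (layer h a a h)).
  split; first exact: layered_simple.
  split; first exact: (layered_max_degree a0 (leqnn a)).
  split; first exact: card_T.
  split; first exact: layered_sim_instance.
  exact: layered_sim_bound.
- exists (vertex h a), (@layered_adj h a 1).
  split; first exact: layered_simple.
  split; first exact: (layered_max_degree a0 a0).
  split; first exact: card_T.
  exact: layered_lb_bound.
Qed.
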